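(* For all integers $n,m\ge 0$, \[ U_{n+m}(x,y,a;q)=\sum_{k=0}^n {n\brack k}(-1)^kq^{\binom k2}(aq^m)^kP_{n-k}(x,y)\,U_m(x,yq^{n-k},a;q). \]
   Context: $q$ is a fixed complex number with $0<|q|<1$; $(a;q)_n=\prod_{i=0}^{n-1}(1-aq^i)$; ${n\brack k}=\frac{(q;q)_n}{(q;q)_k(q;q)_{n-k}}$. The Cauchy polynomials are $P_n(x,y)=\prod_{i=0}^{n-1}(x-q^iy)$, and the Al-Salam–Carlitz polynomials are $U_n(x,y,a;q)=\sum_{k=0}^n{n\brack k}(-1)^kq^{\binom k2}a^kP_{n-k}(x,y)$. *)

From HB Require Import structures.
From mathcomp Require Import all_boot all_order all_algebra.
From mathcomp Require Import complex.
From mathcomp Require Import reals.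
Set Implicit Arguments. Unset Strict Implicit. Unset Printing Implicit Defensive.
Import Order.TTheory GRing.Theory Num.Theory.
Local Open Scope ring_scope.

Section Defs.
Variable (F : fieldType) (q : F).

Definition qpoch (a : F) (n : nat) : F := \prod_(i < n) (1 - a * q ^+ i).

Definition qbinom (n k : nat) : F := qpoch q n / (qpoch q k * qpoch q (n - k)).

Definition cauchyP (n : nat) (x y : F) : F := \prod_(i < n) (x - q ^+ i * y).

Definition alSalamU (n : nat) (x y a : F) : F :=
  \sum_(k < n.+1) qbinom n k * (-1) ^+ k * q ^+ 'C(k, 2) * a ^+ k
                  * cauchyP (n - k) x y.
End Defs.

From HB Require Import structures.
From mathcomp Require Import all_boot all_order all_algebra.
From mathcomp Require Import ring zify.
From mathcomp Require Import complex reals.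
Set Implicit Arguments. Unset Strict Implicit.
Import Order.TTheory GRing.Theory Num.Theory.
Local Open Scope ring_scope.

(* Since |q| < 1, q is not a root of unity, which is all that the two q-Pascal
   rules for Gaussian binomials need.  The second rule gives the recurrence
   U_{m+1}(x,y) = (x - y) U_m(x,yq) - a q^m U_m(x,y).  The identity is then an
   induction on n: write U_{(n+1)+m} = U_{n+(m+1)}, expand it by the induction
   hypothesis, apply the recurrence to each U_{m+1}, and recombine the two
   resulting sums with the first q-Pascal rule. *)

Section GaussianBinomial.
Variables (F : fieldType) (q : F).
Hypothesis q_not_root1 : forall j : nat, (0 < j)%N -> q ^+ j != 1.

Lemma qpochS n : qpoch q q n.+1 = qpoch q q n * (1 - q ^+ n.+1).
Proof. by rewrite /qpoch big_ord_recr /= exprS. Qed.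

Lemma onemX_neq0 j : (0 < j)%N -> 1 - q ^+ j != 0.
Proof. by move=> j_gt0; rewrite subr_eq0 eq_sym q_not_root1. Qed.

Lemma qpoch_neq0 n : qpoch q q n != 0.
Proof. by apply/prodf_neq0 => i _; rewrite -exprS onemX_neq0. Qed.

Lemma qbinom_n0 n : qbinom q n 0 = 1.
Proof. by rewrite /qbinom subn0 /qpoch big_ord0 mul1r divff ?qpoch_neq0. Qed.

Lemma qbinom_nn n : qbinom q n n = 1.
Proof. by rewrite /qbinom subnn /qpoch big_ord0 mulr1 divff ?qpoch_neq0. Qed.

Lemma qbinom_pascal k j :
  qbinom q (k + j).+2 k.+1 = q ^+ k.+1 * qbinom q (k + j).+1 k.+1 + qbinom q (k + j).+1 k
  /\ qbinom q (k + j).+2 k.+1 = qbinom q (k + j).+1 k.+1 + q ^+ j.+1 * qbinom q (k + j).+1 k.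
Proof.
rewrite /qbinom.
have -> : ((k + j).+2 - k.+1 = j.+1)%N by lia.
have -> : ((k + j).+1 - k.+1 = j)%N by lia.
have -> : ((k + j).+1 - k = j.+1)%N by lia.
rewrite (qpochS (k + j).+1) (qpochS k) (qpochS j).
have -> : q ^+ (k + j).+2 = q ^+ k.+1 * q ^+ j.+1 by rewrite -exprD; congr (_ ^+ _); lia.
have qk_neq0 := qpoch_neq0 k; have qj_neq0 := qpoch_neq0 j.
have uk_neq0 := onemX_neq0 (ltn0Sn k); have uj_neq0 := onemX_neq0 (ltn0Sn j).
move: (qpoch q q (k + j).+1) (qpoch q q k) (qpoch q q j) (q ^+ k.+1) (q ^+ j.+1)
  qk_neq0 qj_neq0 uk_neq0 uj_neq0 => P A B u v A_neq0 B_neq0 u_neq0 v_neq0.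
by split; field; rewrite A_neq0 B_neq0 u_neq0 v_neq0.
Qed.

(* [qbinom q n k] is not 0 for k > n (truncated subtraction); [qbin] repairs this. *)
Definition qbin n k := if (k <= n)%N then qbinom q n k else 0.

Lemma qbin0 n : qbin n 0 = 1.
Proof. by rewrite /qbin leq0n qbinom_n0. Qed.

Lemma qbin_gt n k : (n < k)%N -> qbin n k = 0.
Proof. by rewrite /qbin ltnNge => /negbTE ->. Qed.

Lemma qbinS n k : qbin n.+1 k.+1 = q ^+ k.+1 * qbin n k.+1 + qbin n k.
Proof.
case: (ltngtP k n) => [k_lt_n | n_lt_k | ->].
- have [j ->] : exists j, n = (k + j).+1 by exists (n - k.+1)%N; lia.
  by rewrite /qbin !ifT; [case: (qbinom_pascal k j) | lia ..].
- by rewrite !qbin_gt ?mulr0 ?addr0 // ltnW.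
- by rewrite (@qbin_gt n n.+1) // mulr0 add0r /qbin !leqnn !qbinom_nn.
Qed.

Lemma qbinS_dual n k : qbin n.+1 k.+1 = qbin n k.+1 + q ^+ (n - k) * qbin n k.
Proof.
case: (ltngtP k n) => [k_lt_n | n_lt_k | ->].
- have [j ->] : exists j, n = (k + j).+1 by exists (n - k.+1)%N; lia.
  have -> : ((k + j).+1 - k = j.+1)%N by lia.
  by rewrite /qbin !ifT; [case: (qbinom_pascal k j) | lia ..].
- by rewrite !qbin_gt ?mulr0 ?addr0 // ltnW.
- by rewrite (@qbin_gt n n.+1) // subnn expr0 mul1r add0r /qbin !leqnn !qbinom_nn.
Qed.

Lemma sum_qbin_widen n (f : nat -> F) :
  \sum_(k < n.+2) qbin n k * f k = \sum_(k < n.+1) qbin n k * f k.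
Proof. by rewrite big_ord_recr /= qbin_gt // mul0r addr0. Qed.

Lemma sum_qbinS n (f : nat -> F) :
  \sum_(k < n.+2) qbin n.+1 k * f k =
  \sum_(k < n.+1) q ^+ k * qbin n k * f k + \sum_(k < n.+1) qbin n k * f k.+1.
Proof.
rewrite big_ord_recl /= qbin0.
under eq_bigr => i _ do rewrite /bump /= add1n qbinS mulrDl.
rewrite big_split /= addrA; congr (_ + _).
rewrite [RHS](eq_bigr (fun k : 'I_n.+1 => qbin n k * (q ^+ k * f k))); last first.
  by move=> i _; rewrite mulrA (mulrC (qbin _ _)).
rewrite -(sum_qbin_widen n (fun k => q ^+ k * f k)) [RHS]big_ord_recl /= qbin0 expr0 !mul1r.
by congr (_ + _); apply: eq_bigr => i _; rewrite /bump /= add1n !mulrA (mulrC (qbin _ _)).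
Qed.

Lemma sum_qbinS_dual n (f : nat -> F) :
  \sum_(k < n.+2) qbin n.+1 k * f k =
  \sum_(k < n.+1) qbin n k * f k + \sum_(k < n.+1) q ^+ (n - k) * qbin n k * f k.+1.
Proof.
rewrite big_ord_recl /= qbin0.
under eq_bigr => i _ do rewrite /bump /= add1n qbinS_dual mulrDl.
rewrite big_split /= addrA; congr (_ + _).
rewrite -(sum_qbin_widen n f) [RHS]big_ord_recl /= qbin0.
by congr (_ + _); apply: eq_bigr => i _; rewrite /bump /= add1n.
Qed.

End GaussianBinomial.

Section AlSalamCarlitz.
Variables (F : fieldType) (q : F).
Hypothesis q_not_root1 : forall j : nat, (0 < j)%N -> q ^+ j != 1.

Definition qalt k (b : F) := (-1) ^+ k * q ^+ 'C(k, 2) * b ^+ k.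

Lemma qaltS k b : qalt k.+1 b = qalt k b * - (q ^+ k * b).
Proof. rewrite /qalt binS bin1 exprD !exprS; ring. Qed.

Lemma qalt_mulr k b : qalt k (b * q) = q ^+ k * qalt k b.
Proof. rewrite /qalt exprMn; ring. Qed.

Lemma cauchyPS n x y : cauchyP q n.+1 x y = cauchyP q n x y * (x - q ^+ n * y).
Proof. by rewrite /cauchyP big_ord_recr. Qed.

Lemma cauchyPSl n x y : cauchyP q n.+1 x y = (x - y) * cauchyP q n x (y * q).
Proof.
rewrite /cauchyP big_ord_recl /= expr0 mul1r; congr (_ * _).
by apply: eq_bigr => i _; rewrite /bump /= add1n exprSr -mulrA (mulrC q y).
Qed.

Lemma alSalamUE m x y a :
  alSalamU q m x y a = \sum_(k < m.+1) qbin q m k * (qalt k a * cauchyP q (m - k) x y).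
Proof.
by apply: eq_bigr => [[k k_le_m]] _; rewrite /qbin -ltnS k_le_m /qalt !mulrA.
Qed.

Lemma alSalamUS m x y a :
  alSalamU q m.+1 x y a =
  (x - y) * alSalamU q m x (y * q) a - a * q ^+ m * alSalamU q m x y a.
Proof.
rewrite !alSalamUE (sum_qbinS_dual q_not_root1 m (fun k => qalt k a * cauchyP q (m.+1 - k) x y)).
congr (_ + _).
  rewrite big_distrr; apply: eq_bigr => [[k k_le_m]] _ /=.
  rewrite subSn // cauchyPSl; ring.
rewrite big_distrr -sumrN; apply: eq_bigr => [[k k_le_m]] _ /=.
rewrite subSS qaltS.
have -> : q ^+ m = q ^+ (m - k) * q ^+ k by rewrite -exprD subnK.
ring.
Qed.

Lemma alSalamU_addn x a n m y :
  alSalamU q (n + m) x y a =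
  \sum_(k < n.+1) qbin q n k * (qalt k (a * q ^+ m) * cauchyP q (n - k) x y
                                * alSalamU q m x (y * q ^+ (n - k)) a).
Proof.
elim: n m y => [|n IHn] m y.
  by rewrite big_ord1 (qbin0 q_not_root1) /qalt /cauchyP /= big_ord0 !expr0 !mulr1 !mul1r.
rewrite addSnnS IHn (sum_qbinS q_not_root1 n (fun k => qalt k (a * q ^+ m)
  * cauchyP q (n.+1 - k) x y * alSalamU q m x (y * q ^+ (n.+1 - k)) a)).
rewrite -big_split; apply: eq_bigr => [[k k_le_n]] _ /=.
rewrite alSalamUS subSS subSn // cauchyPS qaltS exprSr (exprSr q (n - k)).
rewrite mulrA qalt_mulr [y * (_ * q)]mulrA; ring.
Qed.

End AlSalamCarlitz.

Local Open Scope complex_scope.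

Theorem mainTheorem3 (R : realType) (q : R[i]) (hq0 : 0 < `|q|) (hq1 : `|q| < 1)
    (x y a : R[i]) (n m : nat) :
  alSalamU q (n + m) x y a =
  \sum_(k < n.+1) qbinom q n k * (-1) ^+ k * q ^+ 'C(k, 2) * (a * q ^+ m) ^+ k
                  * cauchyP q (n - k) x y * alSalamU q m x (y * q ^+ (n - k)) a.
Proof.
have q_not_root1 (j : nat) : (0 < j)%N -> q ^+ j != 1.
  move=> j_gt0; apply/eqP => qj1.
  have normqX1 : `|q| ^+ j = 1 by rewrite -normrX qj1 normr1.
  by have := exprn_ilt1 j (normr_ge0 q) hq1; rewrite normqX1 ltxx -lt0n j_gt0.
rewrite (alSalamU_addn q_not_root1); apply: eq_bigr => [[k k_le_n]] _ /=.
by rewrite /qbin -ltnS k_le_n /qalt !mulrA.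
Qed.
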